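(* There exists an absolute constant $c>0$ such that for all sufficiently large $T$ and every online policy $\texttt{ALG}$ (possibly randomized, and possibly using signaling schemes with arbitrary finite signal spaces), there is a problem instance with only $m=2$ states (a prior $\lambda$ and a user utility function $\rho$ satisfying the standing assumptions) on which $\mathrm{Reg}(\texttt{ALG})\ge c\log\log T$. That is, no online policy achieves expected regret better than $\Omega(\log\log T)$, even for instances with binary state.
   Context: Model. There is a finite state space $[m]$ and a prior $\lambda\in\Delta([m])$ known to everyone. Users have action set $\{0,1\}$ and a common utility function $\rho:[m]\times\{0,1\}\to\mathbb{R}$ unknown to the platform. Define $\omega(i)=(\rho(i,1)-\rho(i,0))\lambda(i)$. Standing assumptions: some state has $\omega(i)>0$, and $\sum_i\omega(i)<0$. In each of $T$ rounds: the platform commits to a finite signal space $\Sigma_t$ and a signaling scheme $\pi_t:[m]\to\Delta(\Sigma_t)$; a state $\theta_t\sim\lambda$ is drawn independently and a signal $\sigma_t\sim\pi_t(\theta_t,\cdot)$; user $t$ forms the Bayesian posterior given $\lambda,\pi_t,\sigma_t$ and takes an action $a_t$ maximizing her posterior expected utility; the platform obtains utility $a_t$. An online policy chooses $(\Sigma_t,\pi_t)$ in each round, possibly at random, as a function of the history of past observations (signals, user actions) and internal randomness. $U(\pi)$ is the platform's expected one-round utility under $\pi$. Let $\pi^*$ be an optimal solution of $\max_{\pi\in[0,1]^m}\sum_i\lambda(i)\pi(i)$ s.t. $\sum_i\omega(i)\pi(i)\ge0$ (as a direct scheme recommending action 1 in state $i$ w.p. $\pi(i)$), the optimal scheme in hindsight.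 The regret is $\mathrm{Reg}(\texttt{ALG})=T\,U(\pi^* )-\mathbb{E}[\sum_t U(\pi_t)]$. *)

From HB Require Import structures.
From mathcomp Require Import all_boot all_order all_algebra.
From mathcomp Require Import all_classical all_reals all_analysis.
Unset Printing Implicit Defensive.
Import Order.TTheory GRing.Theory Num.Theory.
Local Open Scope ring_scope.

Section Persuasion.
Context {R : realType}.

Definition state := 'I_2.
Definition prior := state -> R.
(* user utility rho : [m] x {0,1} -> R ; action 1 = true, action 0 = false *)
Definition utility := state -> bool -> R.

Definition is_prior (lam : prior) : Prop :=
  (forall i, 0 <= lam i) /\ \sum_i lam i = 1.

Definition omega (lam : prior) (rho : utility) (i : state) : R :=
  (rho i true - rho i false) * lam i.

Definition standing (lam : prior) (rho : utility) : Prop :=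
  (exists i, 0 < omega lam rho i) /\ \sum_i omega lam rho i < 0.

(* a signaling scheme with finite signal space 'I_nsig (any finite signal
   space is in bijection with some 'I_k) *)
Record scheme := Scheme { nsig : nat; sch : state -> 'I_nsig -> R }.

Definition valid_scheme (s : scheme) : Prop :=
  (forall i j, 0 <= sch s i j) /\ (forall i, \sum_j sch s i j = 1).

Definition sigprob (lam : prior) (s : scheme) (j : 'I_(nsig s)) : R :=
  \sum_i lam i * sch s i j.

Definition posterior (lam : prior) (s : scheme) (j : 'I_(nsig s)) (i : state) : R :=
  lam i * sch s i j / sigprob lam s j.

Definition post_util (lam : prior) (rho : utility) (s : scheme)
  (j : 'I_(nsig s)) (a : bool) : R :=
  \sum_i posterior lam s j i * rho i a.

(* the user's (posterior-utility maximizing) action; ties broken toward 1 *)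
Definition user_action (lam : prior) (rho : utility) (s : scheme)
  (j : 'I_(nsig s)) : bool :=
  post_util lam rho s j false <= post_util lam rho s j true.

Definition U (lam : prior) (rho : utility) (s : scheme) : R :=
  \sum_j sigprob lam s j * (nat_of_bool (user_action lam rho s j))%:R.

(* direct scheme: signal 1 recommends action 1 (w.p. p i in state i) *)
Definition direct (p : state -> R) : scheme :=
  @Scheme 2 (fun i (j : 'I_2) => if (j : nat) == 1%N then p i else 1 - p i).

Definition lp_feasible (lam : prior) (rho : utility) (p : state -> R) : Prop :=
  (forall i, 0 <= p i <= 1) /\ 0 <= \sum_i omega lam rho i * p i.

(* optimal solution of the LP defining the optimal scheme in hindsight *)
Definition is_lp_opt (lam : prior) (rho : utility) (p : state -> R) : Prop :=
  lp_feasible lam rho p /\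
  forall q, lp_feasible lam rho q -> \sum_i lam i * q i <= \sum_i lam i * p i.

(* history of observations: (signal, user action) per past round *)
Definition history := seq (nat * bool).

(* E[ sum of U(pi_t) over the remaining n rounds ] for a deterministic
   policy (given the internal randomness), starting from history h *)
Fixpoint exp_val (lam : prior) (rho : utility) (pol : history -> scheme)
  (n : nat) (h : history) : R :=
  match n with
  | 0 => 0
  | n'.+1 =>
      let s := pol h in
      U lam rho s +
      \sum_(j < nsig s) sigprob lam s j *
         exp_val lam rho pol n' (rcons h (nat_of_ord j, user_action lam rho s j))
  end.

(* online policy: uses the known prior, its internal randomness w : Omega,
   and the history of observations *)
Definition regret {d : measure_display} {Omega : measurableType d}
  (P : probability Omega R) (lam : prior) (rho : utility)
  (alg : prior -> Omega -> history -> scheme) (pstar : state -> R) (T : nat)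
  : \bar R :=
  ((T%:R * U lam rho (direct pstar))%:E
   - \int[P]_w (exp_val lam rho (alg lam w) T [::])%:E)%E.

End Persuasion.

Arguments prior R : clear implicits.
Arguments utility R : clear implicits.
Arguments scheme R : clear implicits.

From HB Require Import structures.
From mathcomp Require Import all_boot all_order all_algebra.
From mathcomp Require Import all_classical all_reals all_analysis.
From mathcomp Require Import measurable_realfun ring lra zify.
Import Order.TTheory GRing.Theory Num.Theory.
Local Open Scope ring_scope.

(* The hard instances have the uniform prior and the utility [util a] (action 1 pays [a] in
   state 0 and [-1] in state 1), with [a] on the grid [(i + 1) / N], [i < T], [N = 8 T].  A
   signal sent with probabilities [x], [y] in the two states is followed by the user of instance
   [a] iff [y <= a x]; relative to the optimum it costs [(a x - y) / 2] on the instances that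
   follow it and [x (1 + a) / 2] on the others.  Against a deterministic policy the instances of
   a set [S] see the same history as long as their users act alike, and by induction on the
   number [n] of remaining rounds their total regret is at least
   [#|S| / 96 * (lnln (n + 8) - lnln (N / #|S|))^+]: a round splits [S] into followers and
   the others, and both the growth of this potential in [n] and its failure to be additive under
   the split are paid for by the loss of the signal, because the followers' grid points are
   [1 / N] apart.  For the whole grid the bound is of order [T lnln T]; averaging over the
   internal randomness and over the [T] instances yields one instance with expected regret at
   least [lnln T / 192]. *)

Section LogLog.
Context {R : realType}.
Implicit Types u x y : R.

Lemma ln_sub_le (p q : R) : 0 < p -> 0 < q -> ln q - ln p <= q / p - 1.
Proof.
move=> p0 q0; rewrite -ln_div ?posrE //.
have h : -1 < q / p - 1 by have := divr_gt0 q0 p0; lra.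
by have := le_ln1Dx h; rewrite addrC subrK.
Qed.

Lemma ln_le_subr1 y : 0 < y -> ln y <= y - 1.
Proof. by move=> y0; have := ln_sub_le 1 y ltr01 y0; rewrite ln1 divr1 subr0. Qed.

Lemma ln2_ge : 1 / 2 <= ln (2 : R).
Proof. by have := ln_sub_le 2 1 ltac:(lra) ltac:(lra); rewrite ln1; lra. Qed.

Lemma ln2_le1 : ln (2 : R) <= 1.
Proof. by have := ln_le_subr1 2 ltac:(lra); lra. Qed.

Lemma ln_pow2 (n : nat) : ln (2 ^+ n : R) = n%:R * ln 2.
Proof. by rewrite lnXn ?mulr_natl //; lra. Qed.

Lemma ln_ge1 x : 8 <= x -> 1 <= ln x.
Proof.
move=> x8; have l8 : 1 <= ln (8 : R).
  by have := ln_pow2 3; rewrite !exprS expr0 !mulr1 -!natrM /= => ->; have := ln2_ge; lra.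
by apply: le_trans l8 _; rewrite ler_ln ?posrE //; lra.
Qed.

Lemma ln_ge1_gt1 u : 1 <= ln u -> 1 < u.
Proof. by move=> lu; rewrite ltNge; apply/negP => /ln_le0; lra. Qed.

Definition lnln x : R := ln (ln x).

Lemma lnlnM_sub_le u y : 1 < u -> 1 <= y -> lnln (u * y) - lnln u <= ln y / ln u.
Proof.
move=> u1 y1; have lu := ln_gt0 u1; have ly := ln_ge0 y1.
rewrite /lnln lnM ?posrE; [|lra|lra].
have := ln_sub_le (ln u) (ln u + ln y) lu ltac:(lra).
by rewrite mulrDl divff ?gt_eqF // addrAC subrr add0r.
Qed.

Lemma lnlnM_sub_le_ln u y : 1 <= ln u -> 1 <= y -> lnln (u * y) - lnln u <= ln y.
Proof.
move=> lu y1; apply: le_trans (lnlnM_sub_le u y (ln_ge1_gt1 u lu) y1) _.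
by rewrite ler_pdivrMr ?ler_peMr ?ln_ge0 //; lra.
Qed.

Lemma lnlnM_sub_le_subr1 u y : 1 <= ln u -> 1 <= y -> lnln (u * y) - lnln u <= y - 1.
Proof.
move=> lu y1; have := lnlnM_sub_le_ln u y lu y1.
have := ln_le_subr1 y ltac:(lra); lra.
Qed.

Lemma lnlnM_sub_le2 u y : 1 < u -> 1 <= y -> y <= u ^+ 2 -> lnln (u * y) - lnln u <= 2.
Proof.
move=> u1 y1 yu; apply: le_trans (lnlnM_sub_le u y u1 y1) _.
have lu := ln_gt0 u1; rewrite ler_pdivrMr //.
have e : ln (u ^+ 2) = 2 * ln u by rewrite lnXn ?mulr_natl //; lra.
have : ln y <= ln (u ^+ 2) by rewrite ler_ln ?posrE ?exprn_gt0 //; lra.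
by rewrite e; lra.
Qed.

Lemma lnlnM_sub_le_div u y : 1 <= ln u -> u ^+ 2 <= y -> lnln (u * y) - lnln u <= 2 * (y / u).
Proof.
move=> lu uy; have u1 := ln_ge1_gt1 u lu.
have uyu : u <= y / u by rewrite ler_pdivlMr -?expr2 //; lra.
have y1 : 1 <= y by apply: le_trans uy; rewrite expr2; nra.
apply: le_trans (lnlnM_sub_le_ln u y lu y1) _.
have -> : ln y = ln u + ln (y / u).
  have yu0 : 0 < y / u by apply: divr_gt0; lra.
  rewrite -lnM ?posrE //; last lra.
  by rewrite mulrC divfK // gt_eqF // (lt_trans ltr01 u1).
have := ln_le_subr1 u ltac:(lra); have := ln_le_subr1 (y / u) ltac:(lra); lra.
Qed.

End LogLog.

Section Potential.
Context {R : realType}.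
Implicit Types N n k : nat.

Definition potential N n k : R :=
  k%:R / 96 * Num.max 0 (lnln (n + 8)%:R - lnln (N%:R / k%:R)).

(* Lower bound, up to a factor [x / 2], on the loss of a signal that [k1] grid instances
   reject and [k2] accept: each rejecting instance loses at least [x / 2], and the accepting
   grid points exceed the threshold [y / x] by at least [0, 1/N, ..., (k2 - 1)/N]. *)
Definition split_loss N (k1 k2 : nat) : R := k1%:R + k2%:R * (k2%:R - 1) / (2 * N%:R).

Lemma potential_ge0 N n k : 0 <= potential N n k.
Proof. by apply: mulr_ge0; rewrite ?divr_ge0 ?ler0n ?le_max ?lexx. Qed.

Lemma potential_ge N n k :
  k%:R / 96 * (lnln (n + 8)%:R - lnln (N%:R / k%:R)) <= potential N n k.
Proof. by rewrite ler_wpM2l ?divr_ge0 ?ler0n // le_max lexx orbT. Qed.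

Lemma potential_n0 N n : potential N n 0 = 0.
Proof. by rewrite /potential mulr0n !mul0r. Qed.

Lemma ratio_ge8 N k : (0 < k)%N -> (8 * k <= N)%N -> 8 <= N%:R / k%:R :> R.
Proof. by move=> k0 hk; rewrite ler_pdivlMr ?ltr0n // -natrM ler_nat. Qed.

Lemma potential_0k N k : (8 * k <= N)%N -> potential N 0 k = 0.
Proof.
case: (posnP k) => [-> _|k0 hk]; first exact: potential_n0.
have u8 := ratio_ge8 N k k0 hk; have l8 := ln_ge1 (8 : R) (lexx _).
have : lnln (0 + 8)%:R <= lnln (N%:R / k%:R) :> R.
  rewrite add0n /lnln ler_ln ?posrE; [|lra|].
  - by rewrite ler_ln ?posrE //; lra.
  - by have := ln_ge1 _ u8; lra.
by rewrite /potential => h; rewrite max_l ?mulr0 //; lra.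
Qed.

Lemma le_split_loss N (k1 k2 : nat) : k1%:R <= split_loss N k1 k2.
Proof.
rewrite lerDl; apply: mulr_ge0; last by rewrite invr_ge0; apply: mulr_ge0; rewrite ?ler0n.
by case: k2 => [|k2]; rewrite ?mulr0n ?mul0r // mulr_ge0 ?ler0n // subr_ge0 ler1n.
Qed.

Lemma split_loss_ge0 N (k1 k2 : nat) : 0 <= split_loss N k1 k2.
Proof. exact: le_trans (ler0n _ _) (le_split_loss _ _ _). Qed.

Lemma split_loss_ge N (k1 k2 : nat) : (k1 + k2 <= N)%N ->
  split_loss N 0 (k1 + k2) <= split_loss N k1 k2.
Proof.
case: (posnP N) => [->|N0 hN].
  by rewrite leqn0 addn_eq0 => /andP[/eqP-> /eqP->]; rewrite lexx.
have Nr : 0 < N%:R :> R by rewrite ltr0n.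
have kN : k1%:R + k2%:R <= N%:R :> R by rewrite -natrD ler_nat.
rewrite /split_loss mulr0n add0r natrD -subr_ge0.
have -> : k1%:R + k2%:R * (k2%:R - 1) / (2 * N%:R)
    - (k1%:R + k2%:R) * (k1%:R + k2%:R - 1) / (2 * N%:R)
    = k1%:R * (2 * N%:R - k1%:R - 2 * k2%:R + 1) / (2 * N%:R) :> R.
  by field; rewrite gt_eqF.
rewrite divr_ge0 ?mulr_ge0 ?ler0n //; have := ler0n R k1; lra.
Qed.

Lemma ratio_split N k k' : (0 < k)%N -> (0 < k')%N ->
  N%:R / k'%:R = N%:R / k%:R * (k%:R / k'%:R) :> R.
Proof. by move=> k0 k'0; rewrite mulrA divfK // pnatr_eq0 -lt0n. Qed.

Lemma split_gap_le N (k1 k2 : nat) : (0 < k1 + k2)%N -> (8 * (k1 + k2) <= N)%N ->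
  k1%:R * (lnln (N%:R / k1%:R) - lnln (N%:R / (k1 + k2)%:R))
  + k2%:R * (lnln (N%:R / k2%:R) - lnln (N%:R / (k1 + k2)%:R))
  <= 12 * split_loss N k1 k2 :> R.
Proof.
move=> k0 hk; set k := (k1 + k2)%N in k0 hk *; set u := N%:R / k%:R.
have u8 : 8 <= u := ratio_ge8 N k k0 hk; have lu := ln_ge1 u u8.
have kr : 0 < k%:R :> R by rewrite ltr0n.
have Np : 0 < N%:R :> R by rewrite ltr0n; apply: leq_trans hk; rewrite muln_gt0 k0.
have split_ge := le_split_loss N k1 k2.
have gap2 : k2%:R * (lnln (N%:R / k2%:R) - lnln u) <= k1%:R.
  case: (posnP k2) => [->|k2p]; first by rewrite mul0r ler0n.
  have k2r : 0 < k2%:R :> R by rewrite ltr0n.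
  have y1 : 1 <= k%:R / k2%:R :> R by rewrite ler_pdivlMr // mul1r ler_nat leq_addl.
  rewrite (ratio_split N k k2) // -/u.
  apply: le_trans (ler_wpM2l (ltW k2r) (lnlnM_sub_le_subr1 _ _ lu y1)) _.
  by rewrite mulrBr mulrCA divff ?gt_eqF // mulr1 mulr1 /k natrD; lra.
case: (posnP k1) => [k10|k1p].
  by move: gap2 split_ge; rewrite k10 mul0r add0r; lra.
have k1r : 0 < k1%:R :> R by rewrite ltr0n.
rewrite (ratio_split N k k1) // -/u; set y := k%:R / k1%:R.
have y1 : 1 <= y by rewrite ler_pdivlMr // mul1r ler_nat leq_addr.
(* Either [k / k1 <= u ^+ 2] and the rejecting part costs at most [2 k1], or [k1 <= k / 64]
   and it is covered by the quadratic term of the accepting part. *)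
have [yu|uy] := lerP y (u ^+ 2).
  have := ler_wpM2l (ltW k1r) (lnlnM_sub_le2 _ _ (ltac:(lra) : 1 < u) y1 yu).
  by move: gap2 split_ge; lra.
have gap1 : k1%:R * (lnln (u * y) - lnln u) <= 2 * k%:R ^+ 2 / N%:R.
  apply: le_trans (ler_wpM2l (ltW k1r) (lnlnM_sub_le_div _ _ lu (ltW uy))) _.
  have -> : k1%:R * (2 * (y / u)) = 2 * k%:R ^+ 2 / N%:R.
    by rewrite /y /u; field; rewrite !gt_eqF.
  exact: lexx.
have k1_small : 64 * k1%:R <= k%:R :> R.
  have : 64 <= y by apply: le_trans (ltW uy); rewrite expr2; nra.
  by rewrite /y ler_pdivlMr // mulrC.
have quad : k%:R ^+ 2 <= 3 * (k2%:R * (k2%:R - 1)) :> R.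
  have k1ge : 1 <= k1%:R :> R by rewrite ler1n.
  move: k1_small; rewrite /k natrD expr2 => small.
  have : 0 <= k2%:R * (k2%:R - 63 * k1%:R) :> R by apply: mulr_ge0; [exact: ler0n | lra].
  nra.
have : 2 * k%:R ^+ 2 / N%:R <= 12 * (k2%:R * (k2%:R - 1) / (2 * N%:R)) :> R.
  have -> : 12 * (k2%:R * (k2%:R - 1) / (2 * N%:R)) = 6 * (k2%:R * (k2%:R - 1)) / N%:R :> R.
    by field; rewrite gt_eqF.
  by apply: ler_wpM2r; [rewrite invr_ge0 ltW | lra].
by rewrite /split_loss; lra.
Qed.

Lemma potential_split_le N n (k1 k2 : nat) : (8 * (k1 + k2) <= N)%N ->
  potential N n (k1 + k2) - potential N n k1 - potential N n k2 <= split_loss N k1 k2 / 8.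
Proof.
move=> hk; have s0 := split_loss_ge0 N k1 k2.
have p1 := potential_ge0 N n k1; have p2 := potential_ge0 N n k2.
case: (posnP (k1 + k2)) => [k0|k0].
  by rewrite k0 potential_n0; lra.
rewrite {1}/potential; case: ler0P => [_|pos]; first by rewrite mulr0; lra.
have q1 := potential_ge N n k1; have q2 := potential_ge N n k2.
have gap := split_gap_le N k1 k2 k0 hk.
set L := lnln (n + 8)%:R in q1 q2 pos *.
set Phi1 := lnln (N%:R / k1%:R) in q1 gap; set Phi2 := lnln (N%:R / k2%:R) in q2 gap.
set Phi := lnln (N%:R / (k1 + k2)%:R) in pos gap *.
have -> : (k1 + k2)%:R / 96 * (L - Phi)
    = k1%:R / 96 * (L - Phi1) + k2%:R / 96 * (L - Phi2)
      + (k1%:R * (Phi1 - Phi) + k2%:R * (Phi2 - Phi)) / 96 :> R.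
  by rewrite natrD; ring.
lra.
Qed.

Lemma potential_succ_sub_le N n k : (n + 9 <= N)%N -> (8 * k <= N)%N ->
  potential N n.+1 k - potential N n k <= split_loss N 0 k / 8.
Proof.
move=> hn hk; have s0 := split_loss_ge0 N 0 k; have p0 := potential_ge0 N n k.
case: (posnP k) => [k0|k0]; first by rewrite k0 in s0 *; rewrite !potential_n0; lra.
rewrite {1}/potential; case: ler0P => [_|pos]; first by rewrite mulr0; lra.
have kr : 0 < k%:R :> R by rewrite ltr0n.
have Nr : 0 < N%:R :> R by rewrite ltr0n; apply: leq_trans hk; rewrite muln_gt0 k0.
have m8 : 8 <= (n + 8)%:R :> R by rewrite ler_nat leq_addl.
have incr : lnln (n.+1 + 8)%:R - lnln (n + 8)%:R <= (n + 8)%:R^-1 :> R.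
  have -> : (n.+1 + 8)%:R = (n + 8)%:R * (1 + (n + 8)%:R^-1) :> R.
    by rewrite mulrDr mulr1 divff ?gt_eqF ?addSn ?natr1 //; lra.
  have := lnlnM_sub_le_subr1 _ (1 + (n + 8)%:R^-1) (ln_ge1 _ m8).
  by rewrite lerDl invr_ge0 ler0n addrAC subrr add0r; apply.
have q := potential_ge N n k.
have step : k%:R / 96 * (lnln (n.+1 + 8)%:R - lnln (N%:R / k%:R)) - potential N n k
    <= k%:R / 96 * (n + 8)%:R^-1 :> R.
  apply: le_trans (_ : k%:R / 96 * (lnln (n.+1 + 8)%:R - lnln (n + 8)%:R) <= _).
    by rewrite mulrBr; move: q; rewrite mulrBr mulrBr; lra.
  by rewrite ler_wpM2l ?divr_ge0 ?ler0n.
apply: le_trans step _.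
(* The potential only grows while [lnln (n + 9) > lnln (N / k)], i.e. [N < (n + 9) k]; then
   [k >= 2], and the increment [k / (96 (n + 8))] is below [k (k - 1) / (16 N)]. *)
have big : (N < (n + 9) * k)%N.
  have : lnln (N%:R / k%:R) < lnln (n.+1 + 8)%:R :> R by lra.
  have l8 := ln_ge1 _ (ratio_ge8 N k k0 hk).
  have l9 : 1 <= ln (n.+1 + 8)%:R :> R by apply: ln_ge1; rewrite ler_nat leq_addl.
  rewrite /lnln ltr_ln ?posrE; [|lra|lra].
  rewrite ltr_ln ?posrE ?ltr0n ?divr_gt0 // ltr_pdivrMr // -natrM ltr_nat.
  by rewrite addSn -addnS.
have Nle : N%:R <= 6 * (n + 8)%:R * (k%:R - 1) :> R.
  have : (N <= 6 * (n + 8) * (k - 1))%N by nia.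
  by rewrite -(ler_nat R) !natrM natrB.
rewrite /split_loss mulr0n add0r -subr_ge0.
have -> : k%:R * (k%:R - 1) / (2 * N%:R) / 8 - k%:R / 96 * (n + 8)%:R^-1
    = k%:R * (96 * (n + 8)%:R * (k%:R - 1) - 16 * N%:R) / (1536 * N%:R * (n + 8)%:R) :> R.
  by field; rewrite !gt_eqF //; lra.
by apply: divr_ge0; [apply: mulr_ge0; lra | apply: mulr_ge0; lra].
Qed.

End Potential.

Section Scheme.
Context {R : realType}.
Variables (lam : prior R) (rho : utility R).
Hypothesis lam_prior : is_prior lam.

Lemma sigprob_ge0 (s : scheme R) j : valid_scheme s -> 0 <= sigprob lam s j.
Proof.
by case=> s0 _; apply: sumr_ge0 => i _; apply: mulr_ge0; [case: lam_prior|].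
Qed.

Lemma sum_sigprob (s : scheme R) : valid_scheme s -> \sum_j sigprob lam s j = 1.
Proof.
case=> _ s1; rewrite /sigprob exchange_big /=; case: lam_prior => _ <-.
by apply: eq_bigr => i _; rewrite -mulr_sumr s1 mulr1.
Qed.

Lemma U_ge0 (s : scheme R) : valid_scheme s -> 0 <= U lam rho s.
Proof.
by move=> vs; apply: sumr_ge0 => j _; rewrite mulr_ge0 ?ler0n ?sigprob_ge0.
Qed.

Lemma exp_val_ge0 (pol : history -> scheme R) n h :
  (forall h, valid_scheme (pol h)) -> 0 <= exp_val lam rho pol n h.
Proof.
move=> valid; elim: n h => [|n IH] h //=.
rewrite addr_ge0 ?U_ge0 //; apply: sumr_ge0 => j _.
by rewrite mulr_ge0 ?sigprob_ge0.
Qed.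

End Scheme.

Section Instance.
Context {R : realType}.
Implicit Types (a : R) (s : scheme R).

Lemma sum_state (F : state -> R) : \sum_i F i = F ord0 + F ord_max.
Proof.
rewrite /state big_ord_recl big_ord_recl big_ord0 addr0.
by congr (_ + F _); apply/val_inj.
Qed.

Definition uniform : prior R := fun=> 2^-1.

Definition util a : utility R :=
  fun i b => if b then (if i == ord0 then a else -1) else 0.

Lemma uniform_prior : is_prior uniform.
Proof. by split=> [i|]; rewrite ?sum_state /uniform; lra. Qed.

Lemma util_standing a : 0 < a < 1 -> standing uniform (util a).
Proof.
move=> /andP[a0 a1]; split; first by exists ord0; rewrite /omega /util eqxx /uniform; lra.
by rewrite sum_state /omega /util eqxx /uniform /=; lra.
Qed.

Lemma sigprob_uniform s j : sigprob uniform s j = (sch s ord0 j + sch s ord_max j) / 2.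
Proof. by rewrite /sigprob sum_state /uniform; field. Qed.

Lemma user_action_util a s j : 0 <= sch s ord0 j -> 0 <= sch s ord_max j ->
  user_action uniform (util a) s j = (sch s ord_max j <= a * sch s ord0 j).
Proof.
set x := sch s ord0 j; set y := sch s ord_max j => x0 y0.
rewrite /user_action /post_util !sum_state /posterior /util /= sigprob_uniform -/x -/y.
rewrite !mulr0 addr0 /uniform.
have [xy0|xy0] := eqVneq (x + y) 0.
  have -> : x = 0 by lra.
  have -> : y = 0 by lra.
  by rewrite !(mulr0, mul0r, add0r).
have xyp : 0 < x + y by rewrite lt_def xy0; lra.
have -> : 2^-1 * x / ((x + y) / 2) * a + 2^-1 * y / ((x + y) / 2) * -1
    = (a * x - y) / (x + y) by field; rewrite xy0.
by rewrite pmulr_lge0 ?invr_gt0 // subr_ge0.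
Qed.

Lemma stateP (i : state) : i = ord0 \/ i = ord_max.
Proof. by case: i => -[|[|//]] Hi; [left|right]; apply/val_inj. Qed.

Lemma lp_feasible_util a q : lp_feasible uniform (util a) q <->
  (forall i, 0 <= q i <= 1) /\ q ord_max <= a * q ord0.
Proof.
rewrite /lp_feasible sum_state /omega /util eqxx /uniform /=.
by split=> -[qb qs]; split=> //; lra.
Qed.

Lemma is_lp_opt_util a p : 0 < a < 1 ->
  is_lp_opt uniform (util a) p <-> p ord0 = 1 /\ p ord_max = a.
Proof.
move=> /andP[a0 a1].
have obj q : \sum_i uniform i * q i = (q ord0 + q ord_max) / 2.
  by rewrite sum_state /uniform; lra.
pose q (i : state) : R := if i == ord0 then 1 else a.
have qf : lp_feasible uniform (util a) q.
  by apply/lp_feasible_util; split=> [i|]; rewrite /q /= ?eqxx; [case: ifP|]; lra.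
split.
  move=> [/lp_feasible_util [pb ps] /(_ q qf)]; rewrite !obj /q eqxx /=.
  by have /andP[? ?] := pb ord0; have /andP[? ?] := pb ord_max => h; split; nra.
move=> [p0 p1]; split.
  by apply/lp_feasible_util; rewrite p0 p1; split=> [i|]; [case: (stateP i) => ->|]; lra.
move=> r /lp_feasible_util [rb rs]; rewrite !obj p0 p1.
by have /andP[? ?] := rb ord0; have /andP[? ?] := rb ord_max; nra.
Qed.

Lemma U_direct_util a p : 0 < a < 1 -> p ord0 = 1 -> p ord_max = a ->
  U uniform (util a) (direct p) = (1 + a) / 2.
Proof.
move=> /andP[a0 a1] p0 p1.
rewrite /U big_ord_recl big_ord1 !user_action_util /= ?p0 ?p1; try lra.
rewrite subrr mulr0 mulr1 lexx (_ : (1 - a <= 0) = false); last first.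
  by apply/negbTE; rewrite -ltNge; lra.
by rewrite !sigprob_uniform /= p0 p1 mulr0 add0r mulr1.
Qed.

Definition signal_loss a (x y : R) : R :=
  if y <= a * x then (a * x - y) / 2 else x * (1 + a) / 2.

Lemma signal_loss_ge0 a (x y : R) : 0 <= a -> 0 <= x -> 0 <= signal_loss a x y.
Proof. by move=> a0 x0; rewrite /signal_loss; case: ifP => h; [lra|nra]. Qed.

Lemma U_util_loss a s : valid_scheme s ->
  (1 + a) / 2 - U uniform (util a) s = \sum_j signal_loss a (sch s ord0 j) (sch s ord_max j).
Proof.
move=> [s0 s1]; have -> : (1 + a) / 2 = \sum_j sch s ord0 j * (1 + a) / 2.
  by rewrite -!mulr_suml s1 mul1r.
rewrite /U -sumrB; apply: eq_bigr => j _.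
rewrite user_action_util ?sigprob_uniform /signal_loss //.
by case: ifP => _ /=; rewrite ?mulr1 ?mulr0; field.
Qed.

End Instance.

Section DetRegret.
Context {R : realType}.
Variable pol : history -> scheme R.
Hypothesis pol_valid : forall h, valid_scheme (pol h).

Definition det_regret (a : R) n h : R :=
  n%:R * ((1 + a) / 2) - exp_val uniform (util a) pol n h.

Lemma det_regret_succ a n h : det_regret a n.+1 h =
  \sum_(j < nsig (pol h)) (signal_loss a (sch (pol h) ord0 j) (sch (pol h) ord_max j)
    + sigprob uniform (pol h) j * det_regret a n
        (rcons h (nat_of_ord j, sch (pol h) ord_max j <= a * sch (pol h) ord0 j))).
Proof.
have vs := pol_valid h; have [s0 _] := vs.
rewrite big_split /= -U_util_loss // /det_regret /= -/(pol h).
under [X in _ = _ + X]eq_bigr => j _ do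
  rewrite mulrBr -user_action_util ?s0 // [_ * (n%:R * _)]mulrC.
rewrite sumrB -mulr_sumr (sum_sigprob _ uniform_prior _ vs) mulr1 -natr1; ring.
Qed.

End DetRegret.

Definition grid {R : realType} (N i : nat) : R := i.+1%:R / N%:R.

Definition accepting {R : realType} (T N : nat) (x y : R) : {set 'I_T} :=
  [set i : 'I_T | y <= grid N i * x].

Section Grid.
Context {R : realType}.
Variables (T N : nat) (pol : history -> scheme R).
Hypotheses (NT : (8 * T <= N)%N) (TN : (T + 8 <= N)%N).
Hypothesis pol_valid : forall h, valid_scheme (pol h).

Let Nr : 0 < N%:R :> R.
Proof. by rewrite ltr0n; apply: leq_trans TN; rewrite addn_gt0 orbT. Qed.

Lemma grid_gt0 (i : 'I_T) : 0 < grid N i :> R.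
Proof. by apply: divr_gt0 Nr; rewrite ltr0n. Qed.

Lemma grid_lt1 (i : 'I_T) : grid N i < 1 :> R.
Proof. by have := ltn_ord i; rewrite /grid (ltr_pdivrMr _ _ Nr) mul1r ltr_nat; lia. Qed.

Lemma sum_grid_sub_ge (A : {set 'I_T}) (r : R) : (forall i, i \in A -> r <= grid N i) ->
  #|A|%:R * (#|A|%:R - 1) / (2 * N%:R) <= \sum_(i in A) (grid N i - r).
Proof.
move: {2}#|A| (erefl #|A|) => k; elim: k A r => [|k IH] A r cardA rA.
  by move/eqP: cardA; rewrite cards_eq0 => /eqP ->; rewrite big_set0 cards0 !mul0r.
have [i0 i0A] : {i0 | i0 \in A} by apply/sigW/card_gt0P; rewrite cardA.
have [m mA0 mmin] := arg_minnP (fun i : 'I_T => val i) i0A.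
have mA : m \in A := mA0.
have cardAm : #|A :\ m| = k by move: cardA; rewrite (cardsD1 m A) mA => -[].
have rAm i : i \in A :\ m -> r + N%:R^-1 <= grid N i.
  rewrite in_setD1 => /andP[im iA]; apply: le_trans (_ : r + N%:R^-1 <= grid N m + N%:R^-1) _.
    by rewrite lerD2r rA.
  have lt_mi : (val m < val i)%N.
    by rewrite ltn_neqAle mmin // andbT; apply: contra im => /eqP/val_inj ->.
  by rewrite /grid -[X in _ + X]mul1r -mulrDl natr1 ler_wpM2r ?invr_ge0 ?ler0n // ler_nat.
rewrite (bigD1 m) //= (eq_bigl (fun i => i \in A :\ m) (fun i => grid N i - r)); last first.
  by move=> i; rewrite in_setD1 andbC.
have -> : \sum_(i in A :\ m) (grid N i - r)
    = \sum_(i in A :\ m) (grid N i - (r + N%:R^-1)) + k%:R * N%:R^-1.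
  rewrite -cardAm mulr_natl -sumr_const -big_split /=; apply: eq_bigr => i _; ring.
have := IH _ _ cardAm rAm; rewrite cardA cardAm; have := rA m mA.
have -> : k.+1%:R * (k.+1%:R - 1) / (2 * N%:R)
    = k%:R * (k%:R - 1) / (2 * N%:R) + k%:R * N%:R^-1 :> R.
  by rewrite -natr1; field; rewrite (gt_eqF Nr).
lra.
Qed.

Lemma signal_loss_sum_ge (S : {set 'I_T}) (x y : R) : 0 <= x ->
  x / 2 * split_loss N #|S :\: accepting T N x y| #|S :&: accepting T N x y|
  <= \sum_(i in S) signal_loss (grid N i) x y.
Proof.
move=> x0; set P := accepting T N x y; have [xz|xp] := eqVneq x 0.
  rewrite xz !mul0r; apply: sumr_ge0 => i _.
  by apply: signal_loss_ge0 => //; exact/ltW/grid_gt0.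
have {}xp : 0 < x by rewrite lt_def xp.
rewrite (big_setID P) /= addrC /split_loss mulrDr.
apply: lerD.
  rewrite -sum1_card natr_sum mulr_sumr ler_sum // => i.
  rewrite finset.in_setD => /andP[/negbTE iP _]; have := grid_gt0 i.
  by rewrite /signal_loss /P inE mulrC in iP *; rewrite iP; nra.
apply: le_trans (ler_wpM2l _ (sum_grid_sub_ge _ (y / x) _)) _; first lra.
  by move=> i; rewrite finset.in_setI inE => /andP[_]; rewrite ler_pdivrMr.
rewrite mulr_sumr ler_sum // => i; rewrite finset.in_setI /P inE => /andP[_ iP].
rewrite /signal_loss iP (_ : (grid N i * x - y) / 2 = x / 2 * (grid N i - y / x)) ?lexx //.
by field; rewrite gt_eqF.
Qed.

Lemma accepting_empty (x y : R) : 0 <= x < y -> accepting T N x y = finset.set0.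
Proof.
move=> /andP[x0 xy]; apply/setP => i; rewrite !inE.
by apply/negbTE; rewrite -ltNge; have := grid_lt1 i; nra.
Qed.

Lemma potential_signal_le n (S : {set 'I_T}) (x y : R) : (n < T)%N -> 0 <= x -> 0 <= y ->
  (x + y) / 2 * potential N n #|S| + x * (potential N n.+1 #|S| - potential N n #|S|)
  <= \sum_(i in S) signal_loss (grid N i) x y
     + (x + y) / 2 * (potential N n #|S :\: accepting T N x y|
                      + potential N n #|S :&: accepting T N x y|).
Proof.
move=> nT x0 y0; have k8 : (8 * #|S| <= N)%N.
  by apply: leq_trans NT; rewrite leq_mul2l -[X in (_ <= X)%N]card_ord max_card.
set P := accepting T N x y; set k := #|S|; set km := #|S :\: P|; set kp := #|S :&: P|.
have kmp : (km + kp)%N = k by rewrite addnC cardsID.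
have := signal_loss_sum_ge S x y x0; rewrite -/P -/km -/kp => loss.
have sl0 := split_loss_ge0 (R := R) N km kp.
have succ : potential N n.+1 k - potential N n k <= split_loss N km kp / 8 :> R.
  have hn : (n + 9 <= N)%N by lia.
  apply: le_trans (potential_succ_sub_le (R := R) N n k hn k8) _.
  by rewrite ler_pM2r // -kmp split_loss_ge // kmp; lia.
have split : (x + y) / 2 * (potential N n k - potential N n km - potential N n kp)
    <= x * (split_loss N km kp / 8) :> R.
  have [yx|xy] := lerP y x.
    have := potential_split_le (R := R) N n km kp; rewrite kmp => /(_ k8) d.
    set D := potential N n k - potential N n km - potential N n kp in d *.
    have [D0|D0] := lerP 0 D; last first.
      have : 0 <= x * (split_loss N km kp / 8) :> R by rewrite mulr_ge0 ?divr_ge0.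
      nra.
    by apply: le_trans (ler_wpM2r D0 (_ : (x + y) / 2 <= x)) (ler_wpM2l x0 d); lra.
  have kp0 : kp = 0%N by rewrite /kp /P accepting_empty ?x0 // finset.setI0 cards0.
  have kmk : km = k by rewrite -kmp kp0 addn0.
  rewrite kmk kp0 potential_n0 !subrr mulr0; apply: mulr_ge0 => //.
  by apply: divr_ge0; rewrite ?split_loss_ge0.
have : x * (potential N n.+1 k - potential N n k) <= x * (split_loss N km kp / 8) :> R.
  exact: ler_wpM2l.
nra.
Qed.

Lemma potential_le_det_regret n h (S : {set 'I_T}) : (n <= T)%N ->
  potential N n #|S| <= \sum_(i in S) det_regret pol (grid N i) n h.
Proof.
elim: n h S => [|n IH] h S nT.
  rewrite potential_0k; last first.
    by apply: leq_trans NT; rewrite leq_mul2l -[X in (_ <= X)%N]card_ord max_card.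
  by rewrite big1 // => i _; rewrite /det_regret /= mulr0n mul0r subr0.
have [s0 s1] := pol_valid h; set s := pol h in s0 s1 *.
under eq_bigr do rewrite (det_regret_succ _ pol_valid) -/s.
rewrite exchange_big /=.
have -> : potential N n.+1 #|S| = \sum_j (sigprob uniform s j * potential N n #|S|
    + sch s ord0 j * (potential N n.+1 #|S| - potential N n #|S|)).
  rewrite big_split /= -!mulr_suml (sum_sigprob _ uniform_prior _ (pol_valid h)) s1; ring.
apply: ler_sum => j _; set x := sch s ord0 j; set y := sch s ord_max j.
rewrite big_split /= -mulr_sumr sigprob_uniform -/x -/y.
apply: le_trans (potential_signal_le n S x y nT (s0 _ _) (s0 _ _)) _.
rewrite lerD2l ler_wpM2l ?divr_ge0 ?addr_ge0 ?s0 //.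
rewrite (big_setID (accepting T N x y)) /= [X in _ <= X]addrC; apply: lerD.
  rewrite (eq_bigr (fun i : 'I_T => det_regret pol (grid N i) n (rcons h (nat_of_ord j, false)))).
    exact: IH (ltnW nT).
  by move=> i /[!inE] /andP[/negbTE ->].
rewrite (eq_bigr (fun i : 'I_T => det_regret pol (grid N i) n (rcons h (nat_of_ord j, true)))).
  exact: IH (ltnW nT).
by move=> i /[!inE] /andP[_ ->].
Qed.

Lemma potential_le_sum_det_regret :
  potential N T T <= \sum_(i < T) det_regret pol (grid N i) T [::].
Proof.
have := potential_le_det_regret T [::] [set: 'I_T] (leqnn T).
by rewrite cardsT card_ord; under eq_bigl do rewrite finset.in_setT.
Qed.

End Grid.

Lemma exists_ge_mean {R : realDomainType} (I : finType) (F : I -> R) c :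
  (0 < #|I|)%N -> #|I|%:R * c <= \sum_i F i -> exists i, c <= F i.
Proof.
move=> I0 hc; case: (pickP (fun i => c <= F i)) => [i ci|none]; first by exists i.
have [i0 _] : {i0 | i0 \in I} by apply/sigW/card_gt0P.
have : \sum_i F i < \sum_(i : I) c.
  by apply: ltr_sum => [|i _]; [apply/hasP; exists i0; rewrite ?mem_index_enum|rewrite ltNge none].
by rewrite sumr_const -mulr_natl; lra.
Qed.

Section Expectation.
Context {R : realType} {d : measure_display} {Omega : measurableType d}.
Variable P : probability Omega R.
Local Open Scope ereal_scope.

Lemma expectation_sum_le (I : finType) (f : I -> Omega -> R) (B : R) :
  (forall i, measurable_fun setT (f i)) -> (forall i w, (0 <= f i w)%R) ->
  (forall w, (\sum_i f i w <= B)%R) ->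
  exists2 e : I -> R, (forall i, \int[P]_w (f i w)%:E = (e i)%:E) & (\sum_i e i <= B)%R.
Proof.
move=> mf f0 fB.
have mfE i : measurable_fun setT (EFin \o f i) by exact/measurable_EFinP.
have int_ge0 i : 0 <= \int[P]_w (f i w)%:E by apply: integral_ge0 => w _; rewrite lee_fin.
have int_sum : \sum_i \int[P]_w (f i w)%:E <= B%:E.
  rewrite -ge0_integral_sum //; last by move=> i w _; rewrite lee_fin.
  apply: le_trans (_ : \int[P]_(w in setT) (cst B%:E w) <= _).
    apply: ge0_le_integral => //.
    - by move=> w _; rewrite sume_ge0 // => i _; rewrite lee_fin.
    - exact: emeasurable_sum.
    - by move=> w _; rewrite sumEFin lee_fin.
  by rewrite integral_cst // (_ : B%:E * P setT = B%:E) // probability_setT mule1.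
have int_fin i : \int[P]_w (f i w)%:E \is a fin_num.
  rewrite ge0_fin_numE // (le_lt_trans _ (ltry B)) //; apply: le_trans int_sum.
  by rewrite (bigD1 i) //= leeDl // sume_ge0.
exists (fun i => fine (\int[P]_w (f i w)%:E)) => [i|]; first by rewrite fineK.
by rewrite -lee_fin -sumEFin; under eq_bigr do rewrite fineK //.
Qed.

End Expectation.

Lemma double_lnln8_le {R : realType} (x : R) : 512 <= x -> 2 * lnln 8 <= lnln x.
Proof.
move=> x512; have l2 := ln2_ge (R := R); have l21 := ln2_le1 (R := R).
have e8 : ln (8 : R) = 3 * ln 2 by rewrite -(ln_pow2 3) !exprS expr0 !mulr1 -!natrM.
have e512 : ln (512 : R) = 9 * ln 2 by rewrite -(ln_pow2 9) !exprS expr0 !mulr1 -!natrM.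
have l8 : 0 < ln (8 : R) by rewrite e8; lra.
have lx : 0 < ln x by apply: ln_gt0; lra.
rewrite /lnln mulr_natl -lnXn // ler_ln ?posrE ?exprn_gt0 //.
apply: le_trans (_ : ln (512 : R) <= _); first by rewrite e8 e512 expr2; nra.
by rewrite ler_ln ?posrE; lra.
Qed.

Lemma potential_init_ge {R : realType} T : (512 <= T)%N ->
  T%:R * (lnln T%:R / 192) <= potential (8 * T) T T :> R.
Proof.
move=> T512; have Tr : 512 <= T%:R :> R by rewrite (ler_nat R 512).
apply: le_trans (potential_ge _ _ _); rewrite natrM mulfK ?pnatr_eq0 -?lt0n; last by lia.
have := double_lnln8_le _ Tr.
have : lnln T%:R <= lnln (T + 8)%:R :> R.
  have lT : 1 <= ln T%:R :> R by apply: ln_ge1; lra.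
  have T0 : 0 < T%:R :> R by lra.
  have T80 : 0 < (T + 8)%:R :> R by rewrite ltr0n addn_gt0 orbT.
  have lT8 : ln T%:R <= ln (T + 8)%:R :> R by rewrite ler_ln ?posrE // ler_nat leq_addr.
  by rewrite /lnln ler_ln ?posrE //; lra.
move=> h1 h2.
rewrite (_ : T%:R * (lnln T%:R / 192) = T%:R / 96 * (lnln T%:R / 2) :> R); last by field.
by rewrite ler_wpM2l ?divr_ge0 ?ler0n //; lra.
Qed.

Theorem mainTheorem2 (R : realType) :
  exists c : R, 0 < c /\
  exists T0 : nat, forall T : nat, (T0 <= T)%N ->
  forall (d : measure_display) (Omega : measurableType d)
         (P : probability Omega R)
         (alg : prior R -> Omega -> history -> scheme R),
    (forall lam w h, valid_scheme (alg lam w h)) ->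
    (forall lam rho, is_prior lam -> standing lam rho ->
       measurable_fun setT (fun w => exp_val lam rho (alg lam w) T [::])) ->
    exists (lam : prior R) (rho : utility R),
      is_prior lam /\ standing lam rho /\
      (exists p, is_lp_opt lam rho p) /\
      forall p, is_lp_opt lam rho p ->
        ((c * ln (ln T%:R))%:E <= regret P lam rho alg p T)%E.
Proof.
exists (1 / 192); split; first lra.
exists 512%N => T T512 d Omega P alg valid meas.
have TN : (T + 8 <= 8 * T)%N by lia.
pose a (i : 'I_T) : R := grid (8 * T) i.
have a01 i : 0 < a i < 1 by rewrite grid_gt0 ?grid_lt1.
have [e int_e sum_e] : exists2 e : 'I_T -> R,
    (forall i, \int[P]_w (exp_val uniform (util (a i)) (alg uniform w) T [::])%:E = (e i)%:E)%E
    & \sum_i e i <= \sum_i T%:R * ((1 + a i) / 2) - potential (8 * T) T T.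
  apply: expectation_sum_le => [i|i w|w].
  - by apply: meas; [exact: uniform_prior | exact: util_standing].
  - exact: exp_val_ge0 _ _ uniform_prior _ _ _ (valid uniform w).
  - have := potential_le_sum_det_regret _ _ _ (leqnn _) TN (valid uniform w).
    by rewrite sumrB /det_regret; lra.
have [i regret_i] : exists i, lnln T%:R / 192 <= T%:R * ((1 + a i) / 2) - e i.
  apply: exists_ge_mean; first by rewrite card_ord; lia.
  by rewrite card_ord sumrB; have := potential_init_ge (R := R) T T512; lra.
exists uniform, (util (a i)); split; first exact: uniform_prior.
split; first exact: util_standing.
split; first by exists (fun j => if j == ord0 then 1 else a i); apply/is_lp_opt_util.
move=> p /is_lp_opt_util-/(_ (a01 i)) [p0 p1].
by rewrite /regret U_direct_util // int_e -EFinB lee_fin /lnln in regret_i *; lra.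
Qed.
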